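(* Let $m\ge1$, $n=2m$, $s=2^m-1$, $t=2^m+1$. Let $\alpha$ be a generator of $\mathbb{F}_{2^n}^\times$, $\beta=\alpha^t$ (a generator of $\mathbb{F}_{2^m}^\times$) and $\gamma=\alpha^s$ (an element of order $2^m+1$), and let $B_{i,j}=\mathrm{tr}_{\mathbb{F}_{2^n}/\mathbb{F}_2}(\beta^i\gamma^j)$ for $(i,j)\in\mathbb{Z}_s\times\mathbb{Z}_t$ (the trace De Bruijn torus), whose $j$-th column is $(B_{i,j})_{0\le i<s}$. Then for each integer $i$, the shifted sequence $\mathsf{DB}_\beta^{[i]}$ appears as a column of $B$ if and only if the polynomial $x^2+\beta^i x+1$ is irreducible over $\mathbb{F}_{2^m}$. Moreover, such a column occurs with multiplicity two, corresponding to the two indices $j$ and $-j\in\mathbb{Z}/t\mathbb{Z}$ satisfying $\mathrm{tr}_{\mathbb{F}_{2^n}/\mathbb{F}_{2^m}}(\gamma^j)=\beta^i$.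
   Context: $\mathrm{tr}_{K/F}$ denotes the field trace. $\mathsf{DB}_\beta=(\mathrm{tr}_{\mathbb{F}_{2^m}/\mathbb{F}_2}(\beta^k))_{0\le k<s}$ is the standard trace De Bruijn sequence, and $\mathsf{DB}_\beta^{[i]}=(\mathrm{tr}_{\mathbb{F}_{2^m}/\mathbb{F}_2}(\beta^{i+k}))_{0\le k<s}$ its cyclic shift by $i$ (indices mod $s$). *)

From HB Require Import structures.
From mathcomp Require Import all_boot all_order all_algebra all_field.
Set Implicit Arguments. Unset Strict Implicit. Unset Printing Implicit Defensive.
Import GRing.Theory.
Local Open Scope ring_scope.

(* Absolute trace tr_{F_{2^d}/F_2}(x) = sum_{l<d} x^(2^l), computed in a field
   L of characteristic 2 containing F_{2^d}. *)
Definition trace2 (L : fieldType) (d : nat) (x : L) : L :=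
  \sum_(l < d) x ^+ (2 ^ l).

Definition trace_rel (L : fieldType) (m : nat) (x : L) : L :=
  x + x ^+ (2 ^ m).

Definition torus_col (L : fieldType) (m : nat) (beta gamma : L) (j : nat)
  : 'I_(2 ^ m - 1) -> L :=
  fun k => trace2 (2 * m) (beta ^+ k * gamma ^+ j).

Definition DB_shift (L : fieldType) (m : nat) (beta : L) (i : int)
  : 'I_(2 ^ m - 1) -> L :=
  fun k => trace2 m (beta ^ (i + (k : nat)%:Z)).
Arguments torus_col {L} m beta gamma j _.
Arguments DB_shift {L} m beta i _.

(* Since beta lies in F_{2^m}, transitivity of the trace gives
   B_{k,j} = tr_{F_{2^m}/F_2}(beta^k tr_rel(gamma^j)), so column j equals DB_beta^{[i]}
   iff x |-> tr_{F_{2^m}/F_2}(x d) vanishes at the 2^m - 1 powers of beta and at 0, for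
   d = tr_rel(gamma^j) - beta^i.  For d != 0 this is a nonzero polynomial of degree
   2^{m-1} in x, so the column condition is tr_rel(gamma^j) = beta^i.
   On the circle y^{2^m+1} = 1 we have y^{2^m} = y^-1, hence tr_rel(y) = y + y^-1, and
   tr_rel(y) = c iff y is a root of X^2 + cX + 1, whose roots are then y and y^-1.
   An irreducible X^2 + cX + 1 has a root r in F_{2^{2m}}, and Frobenius sends r to the
   other root r^-1, so r^{2^m+1} = 1 and r is a power of gamma.  Conversely, a root in
   F_{2^m} of X^2 + (y + y^-1)X + 1 would be y or y^-1 and fixed by Frobenius, forcing
   it to be 1 and c = 0.  The solutions j and -j differ since y = y^-1 would give c = 0. *)

From HB Require Import structures.
From mathcomp Require Import all_boot all_order all_algebra all_field.
From mathcomp Require Import ring.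
From Stdlib Require Import FunctionalExtensionality.

Set Implicit Arguments.
Unset Strict Implicit.
Unset Printing Implicit Defensive.
Import GRing.Theory.
Local Open Scope ring_scope.

Section Char2.
Variables (F : fieldType) (chF : 2 \in [pchar F]).

Lemma exprD_pow2_pchar2 (x y : F) l :
  (x + y) ^+ (2 ^ l) = x ^+ (2 ^ l) + y ^+ (2 ^ l).
Proof. by rewrite exprDn_pchar // pnatX (eq_pnat _ (pcharf_eq chF)) pnat_id. Qed.

Lemma trace2D d (x y : F) : trace2 d (x + y) = trace2 d x + trace2 d y.
Proof.
by rewrite /trace2 -big_split; apply: eq_bigr => l _; rewrite exprD_pow2_pchar2.
Qed.

Lemma trace2_tower m (b x : F) : b ^+ (2 ^ m) = b ->
  trace2 (2 * m) (b * x) = trace2 m (b * trace_rel m x).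
Proof.
move=> bq; rewrite /trace2 /trace_rel mul2n -addnn big_split_ord /= mulrDr.
under [RHS]eq_bigr do rewrite exprD_pow2_pchar2.
rewrite big_split /=.
by congr (_ + _); apply: eq_bigr => l _; rewrite expnD exprM exprMn bq.
Qed.

Lemma addr_eq0_pchar2 (x y : F) : (x + y == 0) = (x == y).
Proof. by rewrite addr_eq0 (oppr_pchar2 chF). Qed.

Lemma sqrf_eq1_pchar2 (x : F) : (x ^+ 2 == 1) = (x == 1).
Proof. by rewrite sqrf_eq1 (oppr_pchar2 chF) orbb. Qed.

Lemma quadratic_roots_pchar2 (x y z : F) : x * y = 1 ->
  (z ^+ 2 + (x + y) * z + 1 == 0) = (z == x) || (z == y).
Proof.
move=> xy1; have -> : z ^+ 2 + (x + y) * z + 1 = (z + x) * (z + y).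
  by rewrite -xy1; ring.
by rewrite mulf_eq0 !addr_eq0_pchar2.
Qed.

Lemma quadratic_root_addrV_pchar2 (c z : F) : z != 0 ->
  (z ^+ 2 + c * z + 1 == 0) = (z + z^-1 == c).
Proof.
move=> z_neq0; have -> : z ^+ 2 + c * z + 1 = z * (z + z^-1 + c).
  by rewrite !mulrDr mulfV // -expr2 mulrC; ring.
by rewrite mulf_eq0 (negbTE z_neq0) addr_eq0_pchar2.
Qed.

End Char2.

Lemma trace2_0 (F : fieldType) m : trace2 m (0 : F) = 0.
Proof. by rewrite /trace2 big1 // => l _; rewrite expr0n expn_eq0. Qed.

Lemma trace2_mul_eq0 (F : fieldType) m (d : F) (xs : seq F) :
    (0 < m)%N -> uniq xs -> (2 ^ m.-1 < size xs)%N ->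
  {in xs, forall x, trace2 m (x * d) = 0} -> d = 0.
Proof.
move=> m_gt0 xs_uniq xs_big xs_roots; apply/eqP; apply: contraLR xs_big.
rewrite -leqNgt => d_neq0.
pose P := \sum_(l < m) d ^+ (2 ^ l) *: 'X^(2 ^ l) : {poly F}.
have P_coef k : P`_k = \sum_(l < m | (2 ^ l == k)%N) d ^+ (2 ^ l).
  by rewrite coef_sumMXn.
have top : (m.-1 < m)%N by rewrite prednK.
have P_neq0 : P != 0.
  apply: contraNneq (expf_neq0 (2 ^ m.-1) d_neq0) => P0.
  have := P_coef (2 ^ m.-1)%N; rewrite P0 coef0.
  by rewrite (big_pred1 (Ordinal top)) => [<-|l] //=; rewrite eqn_exp2l.
have P_size : (size P <= (2 ^ m.-1).+1)%N.
  apply/leq_sizeP => k k_big; rewrite P_coef big_pred0 // => l /=.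
  by apply: contraTF k_big => /eqP <-; rewrite -ltnNge ltnS leq_pexp2l // -ltnS prednK.
rewrite -ltnS; apply: leq_trans (max_poly_roots P_neq0 _ xs_uniq) P_size.
apply/allP => x /xs_roots; rewrite /root => <-; apply/eqP.
rewrite horner_sum; apply: eq_bigr => l _.
by rewrite hornerZ hornerXn exprMn mulrC.
Qed.

Section TorusColumns.
Variables (m : nat) (L : fieldType) (chL : 2 \in [pchar L]).
Variables (beta gamma : L) (beta_prim : (2 ^ m - 1).-primitive_root beta).

Let s_gt0 : (0 < 2 ^ m - 1)%N := prim_order_gt0 beta_prim.

Let beta_neq0 : beta != 0.
Proof. by rewrite (prim_root_eq0 beta_prim) -lt0n. Qed.

Let beta_expq : beta ^+ (2 ^ m) = beta.
Proof.
by rewrite -{1}(prednK (expn_gt0 2 m)) exprSr -subn1 (prim_expr_order beta_prim) mul1r.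
Qed.

Lemma trace2_beta_eq0 (d : L) :
  [forall k : 'I_(2 ^ m - 1), trace2 m (beta ^+ k * d) == 0] = (d == 0).
Proof.
apply/forallP/eqP => [trace0 | -> k]; last by rewrite mulr0 trace2_0.
have m_gt0 : (0 < m)%N by move: s_gt0; case: m.
apply: (@trace2_mul_eq0 _ m d (0 :: [seq beta ^+ k | k <- iota 0 (2 ^ m - 1)])) => //=.
- rewrite map_inj_in_uniq ?iota_uniq ?andbT.
    by apply/mapP => -[k _ /esym/eqP]; rewrite expf_eq0 (negbTE beta_neq0) andbF.
  move=> k l; rewrite !mem_iota !add0n => k_lt l_lt /eqP.
  by rewrite (eq_prim_root_expr beta_prim) !modn_small // => /eqP.
- by rewrite size_map size_iota subn1 prednK ?expn_gt0 // ltn_exp2l // prednK.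
- move=> x /predU1P [-> | /mapP [k]]; first by rewrite mul0r trace2_0.
  by rewrite mem_iota add0n => k_lt ->; apply/eqP/(trace0 (Ordinal k_lt)).
Qed.

Lemma torus_colE (j : nat) (i : int) :
  [forall k, torus_col m beta gamma j k == DB_shift m beta i k]
    = (trace_rel m (gamma ^+ j) == beta ^ i).
Proof.
rewrite -(addr_eq0_pchar2 chL) -trace2_beta_eq0; apply: eq_forallb => k.
rewrite /torus_col /DB_shift (trace2_tower chL); last by rewrite exprAC beta_expq.
rewrite [in RHS]mulrDr (trace2D chL) (addr_eq0_pchar2 chL).
by rewrite expfzDr // -exprnP [_ * beta ^+ k]mulrC.
Qed.

Lemma torus_colP (j : nat) (i : int) :
  torus_col m beta gamma j = DB_shift m beta i <-> trace_rel m (gamma ^+ j) = beta ^ i.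
Proof.
split => [eq_col | /eqP].
  by apply/eqP; rewrite -torus_colE; apply/forallP => k; rewrite eq_col.
rewrite -torus_colE => /forallP eq_col.
by apply: functional_extensionality => k; apply/eqP.
Qed.

End TorusColumns.

Lemma irredp_root_ext (K L : finFieldType) (f : {rmorphism K -> L}) (p : {poly K}) :
    irreducible_poly p -> p \is monic -> (2 < size p)%N ->
    #|L| = (#|K| ^ (size p).-1)%N ->
  exists r, root (map_poly f p) r.
Proof.
move=> p_irr p_monic p_size cardL.
pose p_mi : monic_irreducible_poly p := (p_irr, p_monic).
have p_dvd : p %| 'X^#|L| - 'X.
  have qX_fixed : ('qX : {poly %/ p with p_mi}) ^+ #|L| = 'qX.
    by rewrite cardL -card_qfpoly expf_card.
  have : in_qpoly p ('X^#|L| - 'X) = 0 by rewrite rmorphB rmorphXn qX_fixed subrr.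
  by move/(congr1 val); rewrite /= (mk_monicE p_mi) dvdpE => /eqP.
have := dvdp_map f p ('X^#|L| - 'X).
rewrite p_dvd rmorphB /= map_polyXn map_polyX finField_genPoly.
case/dvdp_prod_XsubC => ms p_eqp; have := eqp_size p_eqp.
rewrite size_map_poly size_prod_XsubC; case def_rs: (mask ms _) => [|r rs] p_size'.
  by rewrite p_size' in p_size.
by exists r; rewrite (eqp_root p_eqp) root_prod_XsubC def_rs mem_head.
Qed.

Lemma fmorph_codomE (K L : finFieldType) (f : {rmorphism K -> L}) (y : L) :
  (y \in codom f) = (y ^+ #|K| == y).
Proof.
apply/codomP/eqP => [[k ->] | y_fixed]; first by rewrite -rmorphXn expf_card.
have := congr1 (map_poly f) (finField_genPoly K).
rewrite rmorphB /= map_polyXn map_polyX rmorph_prod => /(congr1 (horner^~ y)).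
rewrite !hornerE y_fixed subrr horner_prod => /esym/eqP/prodf_eq0 [k _].
by rewrite /= map_polyXsubC hornerXsubC subr_eq0 => /eqP ->; exists k.
Qed.

Lemma irredp_root_size (F : fieldType) (p : {poly F}) (x : F) :
  irreducible_poly p -> root p x -> size p = 2%N.
Proof.
move=> p_irr p_x; have := p_irr.2 ('X - x%:P); rewrite size_XsubC dvdp_XsubCl p_x.
by move=> /(_ isT isT) /eqp_size <-; rewrite size_XsubC.
Qed.

Lemma prim_expr_opp (F : fieldType) n (z : F) (j : 'I_n) :
  n.-primitive_root z -> z ^+ ((n - j) %% n) = (z ^+ j)^-1.
Proof.
move=> z_prim; rewrite (prim_expr_mod z_prim); apply/esym/mulr1_eq.
by rewrite -exprD subnKC ?(prim_expr_order z_prim) // ltnW.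
Qed.

Lemma exp_prim_root_cofactor (F : fieldType) a b (z : F) :
  (a * b).-primitive_root z -> a.-primitive_root (z ^+ b).
Proof.
move=> z_prim; have := prim_order_gt0 z_prim; rewrite muln_gt0 => /andP [a_gt0 _].
by have := dvdn_prim_root z_prim (dvdn_mulr b (dvdnn a)); rewrite mulKn.
Qed.

Lemma prim_root_exprX (F : fieldType) n (z : F) j :
  n.-primitive_root z -> (z ^+ j) ^+ n = 1.
Proof. by move=> z_prim; rewrite exprAC (prim_expr_order z_prim) expr1n. Qed.

Section UnitCircle.
Variables (m : nat) (F : fieldType) (chF : 2 \in [pchar F]).
Local Notation t := (2 ^ m + 1)%N.

Lemma trace_rel_circle (y : F) : y ^+ t = 1 -> trace_rel m y = y + y^-1.
Proof.
move=> y_t; have y_inv : y * y ^+ (2 ^ m) = 1 by rewrite -exprS -addn1.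
by rewrite /trace_rel (mulr1_eq y_inv).
Qed.

Lemma trace_rel_circle_eq (x y : F) : x ^+ t = 1 -> y ^+ t = 1 ->
  (trace_rel m y == trace_rel m x) = (y == x) || (y == x^-1).
Proof.
have circle_neq0 (z : F) : z ^+ t = 1 -> z != 0.
  by move=> z_t; apply: contra_eq_neq z_t => ->; rewrite expr0n addn1 eq_sym oner_neq0.
move=> x_t y_t; rewrite !trace_rel_circle // -quadratic_root_addrV_pchar2 ?circle_neq0 //.
by rewrite quadratic_roots_pchar2 // mulfV ?circle_neq0.
Qed.

End UnitCircle.

Section ReciprocalQuadratic.
Variables (m : nat) (K L : finFieldType) (f : {rmorphism K -> L}).
Hypotheses (cardK : #|K| = (2 ^ m)%N) (cardL : #|L| = (2 ^ (2 * m))%N).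
Variables (gamma : L) (gamma_prim : (2 ^ m + 1).-primitive_root gamma).

Local Notation q := (2 ^ m)%N.
Local Notation quad b := ('X^2 + b *: 'X + 1 : {poly K}).

Let chL : 2 \in [pchar L]. Proof. exact: card_finPcharP cardL _. Qed.

Let size_quad_tail (b : K) : (size (b *: 'X + 1 : {poly K})%R < 3)%N.
Proof.
apply: leq_ltn_trans (size_polyD _ _) _; rewrite size_poly1 gtn_max andbT.
by apply: leq_ltn_trans (size_scale_leq _ _) _; rewrite size_polyX.
Qed.

Lemma size_quad (b : K) : size (quad b) = 3%N.
Proof. by rewrite -addrA size_polyDl size_polyXn. Qed.

Lemma monic_quad (b : K) : quad b \is monic.
Proof. by rewrite monicE -addrA lead_coefDl ?lead_coefXn // size_polyXn. Qed.

Lemma root_map_quad (b : K) (z : L) :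
  root (map_poly f (quad b)) z = (z ^+ 2 + f b * z + 1 == 0).
Proof.
by rewrite /root !rmorphD /= map_polyXn map_polyZ map_polyX rmorph1 !hornerE.
Qed.

Let gamma_neq0 (j : nat) : gamma ^+ j != 0.
Proof. by rewrite expf_neq0 // (prim_root_eq0 gamma_prim) addn1. Qed.

Lemma irreducible_quadP (b : K) : b != 0 ->
  irreducible_poly (quad b) <-> exists j : 'I_(q + 1), trace_rel m (gamma ^+ j) = f b.
Proof.
move=> b_neq0; split => [quad_irr | [j trace_j]].
  have cardLK : #|L| = (#|K| ^ (size (quad b)).-1)%N.
    by rewrite size_quad cardL cardK -expnM mulnC.
  have quad_size_gt2 : (2 < size (quad b))%N by rewrite size_quad.
  have [r] := irredp_root_ext f quad_irr (monic_quad b) quad_size_gt2 cardLK.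
  rewrite root_map_quad => r_root.
  have r_neq0 : r != 0.
    by apply: contraTneq r_root => ->; rewrite expr0n mulr0 !add0r oner_eq0.
  have b_sum : r + r^-1 = f b by apply/eqP; rewrite -quadratic_root_addrV_pchar2.
  have rq_root : (r ^+ q) ^+ 2 + f b * r ^+ q + 1 == 0.
    have b_fixed : f b ^+ q = f b by rewrite -rmorphXn -cardK expf_card.
    move/eqP: r_root => /(congr1 (fun z => z ^+ q)) /=.
    rewrite !(exprD_pow2_pchar2 chL) exprAC [(f b * r) ^+ _]exprMn b_fixed.
    by rewrite expr1n expr0n expn_eq0 => ->.
  move: rq_root; rewrite -b_sum quadratic_roots_pchar2 ?mulfV //.
  case/orP => [/eqP r_fixed | /eqP r_inv].
    have /codomP [k r_k] : r \in codom f by rewrite fmorph_codomE cardK r_fixed.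
    suff : size (quad b) = 2%N by rewrite size_quad.
    apply: (irredp_root_size quad_irr (x := k)).
    by rewrite -(fmorph_root f) -r_k root_map_quad.
  have r_circle : r ^+ (q + 1) = 1 by rewrite addn1 exprSr r_inv mulVf.
  have [j r_j] := prim_rootP gamma_prim r_circle.
  by exists j; rewrite -r_j (trace_rel_circle r_circle).
apply: cubic_irreducible => [|k]; first by rewrite size_quad.
apply: contraNN b_neq0; rewrite -(fmorph_root f) root_map_quad => k_root.
have fk_circle : f k ^+ (q + 1) = 1.
  move: k_root; rewrite -trace_j (trace_rel_circle (prim_root_exprX j gamma_prim)).
  rewrite quadratic_roots_pchar2 ?mulfV //.
  by case/orP => /eqP ->; rewrite ?exprVn (prim_root_exprX _ gamma_prim) ?invr1.
have fk_fixed : f k ^+ q = f k by rewrite -rmorphXn -cardK expf_card.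
have /eqP fk1 : f k == 1.
  by move: fk_circle; rewrite addn1 exprSr fk_fixed -expr2 -(sqrf_eq1_pchar2 chL) => ->.
by move: k_root; rewrite fk1 expr1n mulr1 addrAC (addrr_pchar2 chL) add0r fmorph_eq0.
Qed.

End ReciprocalQuadratic.

Theorem mainTheorem6
  (m : nat) (hm : (1 <= m)%N)
  (L : finFieldType) (hL : #|L| = (2 ^ (2 * m))%N)
  (K : finFieldType) (hK : #|K| = (2 ^ m)%N)
  (f : {rmorphism K -> L})
  (alpha : L) (halpha : (2 ^ (2 * m) - 1)%N.-primitive_root alpha) :
  let s := (2 ^ m - 1)%N in
  let t := (2 ^ m + 1)%N in
  let beta := alpha ^+ t in
  let gamma := alpha ^+ s in
  forall (i : int) (b : K), f b = beta ^ i ->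
    ((exists j : 'I_t, torus_col m beta gamma j = DB_shift m beta i)
       <-> irreducible_poly ('X^2 + b *: 'X + 1 : {poly K}))
    /\
    (irreducible_poly ('X^2 + b *: 'X + 1 : {poly K}) ->
       exists j0 j1 : 'I_t,
         [/\ j0 != j1, (j1 : nat) = ((t - j0) %% t)%N,
             [set j : 'I_t | [forall k, torus_col m beta gamma j k == DB_shift m beta i k]]
               = [set j0; j1]
           & forall j : 'I_t,
               torus_col m beta gamma j = DB_shift m beta i
               <-> trace_rel m (gamma ^+ j) = beta ^ i]).
Proof.
(* [hm] is implied by [halpha], a primitive root of order 2^(2m) - 1 > 0. *)
move=> s t beta gamma i b fb_beta.
have chL : 2 \in [pchar L] := card_finPcharP hL isT.
have st_split : (2 ^ (2 * m) - 1 = s * t)%N by rewrite -subn_sqr exp1n -expnM mulnC.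
have beta_prim : s.-primitive_root beta.
  by apply: exp_prim_root_cofactor; rewrite -st_split.
have gamma_prim : t.-primitive_root gamma.
  by apply: exp_prim_root_cofactor; rewrite mulnC -st_split.
have b_neq0 : b != 0.
  rewrite -(fmorph_eq0 f) fb_beta expfz_neq0 // (prim_root_eq0 beta_prim).
  by rewrite -lt0n (prim_order_gt0 beta_prim).
have columnP (j : 'I_t) := torus_colP chL gamma beta_prim j i.
have quadP := irreducible_quadP f hK hL gamma_prim b_neq0.
split.
  rewrite quadP fb_beta.
  by split=> -[j trace_j]; exists j; apply/columnP.
move=> /quadP [j0]; rewrite fb_beta => trace_j0.
pose j1 : 'I_t := Ordinal (ltn_pmod (t - j0) (prim_order_gt0 gamma_prim)).
have gamma_j1 : gamma ^+ j1 = (gamma ^+ j0)^-1 := prim_expr_opp j0 gamma_prim.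
have gamma_inj (j j' : 'I_t) : (gamma ^+ j == gamma ^+ j') = (j == j').
  by rewrite (eq_prim_root_expr gamma_prim) !modn_small.
exists j0, j1; split => //.
- rewrite -gamma_inj gamma_j1; apply: contraNneq b_neq0 => j0_inv.
  rewrite -(fmorph_eq0 f) fb_beta -trace_j0.
  rewrite (trace_rel_circle (prim_root_exprX j0 gamma_prim)).
  by rewrite -j0_inv (addrr_pchar2 chL).
- apply/setP => j; rewrite !inE (torus_colE chL gamma beta_prim) -trace_j0.
  rewrite (trace_rel_circle_eq chL) ?(prim_root_exprX _ gamma_prim) //.
  by rewrite -gamma_j1 !gamma_inj.
Qed.
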